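(* Let $M$ be a matroid of rank $r$ on a finite set $E$, and let $\mathcal H$ be the set of hyperplanes of $M$. Suppose that for each $H\in\mathcal H$, $U_H$ is an $(r-1)$-free set with $\mathrm{cl}_{r-2}(U_H)=H$, and put \[ \mathcal U=\{U_H : H\in\mathcal H,\ |U_H|\ge r\}. \] Then $\mathcal U$ is the set of dependent hyperplanes of a paving matroid of rank $r$ on $E$.
   Context: A set $U\subseteq E$ is $k$-free (in $M$) if there is no circuit $C$ of $M$ with $|C|\le k$ and $C\subseteq U$. A set $X$ is $k$-closed in $M$ if $\mathrm{cl}_M(Y)\subseteq X$ for all $Y\subseteq X$ with $|Y|\le k$; $\mathrm{cl}_k(X)$ is the intersection of all $k$-closed sets containing $X$. A matroid of rank $r$ is paving if all its circuits have at least $r$ elements. *)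

From mathcomp Require Import all_boot all_order all_algebra.
Set Implicit Arguments. Unset Strict Implicit. Unset Printing Implicit Defensive.

(* A matroid on a finite ground set E, represented as the finite type T
   (so E = [set: T]), given by its independent sets. *)
Record matroid (T : finType) := Matroid {
  indep : {set T} -> bool;
  indep0 : indep set0;
  indep_sub : forall I J : {set T}, J \subset I -> indep I -> indep J;
  indep_aug : forall I J : {set T}, indep I -> indep J -> #|I| < #|J| ->
    exists2 x, x \in J :\: I & indep (x |: I)
}.

Section MatroidDefs.
Variables (T : finType) (M : matroid T).

Definition mrank (X : {set T}) : nat :=
  \max_(I : {set T} | indep M I && (I \subset X)) #|I|.

Definition mrk : nat := mrank [set: T].

Definition circuit (C : {set T}) : bool :=
  ~~ indep M C && [forall x in C, indep M (C :\ x)].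

Definition mcl (X : {set T}) : {set T} :=
  [set x | mrank (x |: X) == mrank X].

Definition flat (X : {set T}) : bool := mcl X == X.

Definition hyperplane (H : {set T}) : bool := flat H && ((mrank H).+1 == mrk).

Definition kfree (k : nat) (U : {set T}) : bool :=
  [forall C : {set T}, ~~ [&& circuit C, #|C| <= k & C \subset U]].

(* X is k-closed: cl(Y) \subset X for all Y \subset X with |Y| <= k.
   k is an integer so that negative k (e.g. r - 2 with r = 1) is allowed. *)
Definition kclosed (k : int) (X : {set T}) : bool :=
  [forall Y : {set T}, (Y \subset X) && (#|Y|%:Z <= k)%R ==> (mcl Y \subset X)].

Definition clk (k : int) (X : {set T}) : {set T} :=
  \bigcap_(Z : {set T} | kclosed k Z && (X \subset Z)) Z.

Definition paving : bool := [forall C : {set T}, circuit C ==> (mrk <= #|C|)].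

Definition dependent_hyperplane (H : {set T}) : bool :=
  hyperplane H && ~~ indep M H.

End MatroidDefs.

From mathcomp Require Import all_boot all_order all_algebra zify.
Set Implicit Arguments.
Unset Strict Implicit.
Unset Printing Implicit Defensive.

(* A family of sets of size at least r, any r - 1 elements of which lie in at
   most one member, is the family of dependent hyperplanes of the paving
   matroid whose bases are the r-sets not covered by a member. The sets U_H
   with |U_H| >= r form such a family: U_H is contained in H since
   cl_(r-2)(U_H) = H, any r - 1 elements of U_H are independent since U_H is
   (r-1)-free, and an independent (r-1)-set spans exactly one hyperplane. *)

Lemma subset_of_card (T : finType) (A : {set T}) k :
  k <= #|A| -> exists2 S : {set T}, S \subset A & #|S| = k.
Proof.
rewrite -bin_gt0 -cards_draws => /card_gt0P[S].
by rewrite inE => /andP[sSA /eqP cS]; exists S.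
Qed.

Section MatroidRank.
Variables (T : finType) (M : matroid T).
Implicit Types (I X Y : {set T}).

Lemma mrank_ub I X : indep M I -> I \subset X -> #|I| <= mrank M X.
Proof.
move=> iI sIX; apply: (leq_bigmax_cond (F := fun I : {set T} => #|I|)).
by rewrite iI sIX.
Qed.

Lemma mrank_witness X :
  exists2 I, indep M I && (I \subset X) & #|I| = mrank M X.
Proof.
have : 0 < #|[pred I : {set T} | indep M I && (I \subset X)]|.
  by apply/card_gt0P; exists set0; rewrite inE indep0 sub0set.
by case/(eq_bigmax_cond (fun I : {set T} => #|I|)) => I; rewrite inE; exists I.
Qed.

Lemma mrank_leP X k :
  (forall I, indep M I -> I \subset X -> #|I| <= k) -> mrank M X <= k.
Proof. by have [I /andP[iI sIX] <-] := mrank_witness X; apply. Qed.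

Lemma mrankS X Y : X \subset Y -> mrank M X <= mrank M Y.
Proof.
have [I /andP[iI sIX] <-] := mrank_witness X => sXY.
by apply: mrank_ub iI (subset_trans sIX sXY).
Qed.

Lemma flat_rank_eq X Y :
  flat M X -> X \subset Y -> mrank M Y <= mrank M X -> Y = X.
Proof.
move=> /eqP clX sXY rYX; apply/eqP; rewrite eqEsubset andbC sXY.
apply/subsetP => y yY; rewrite -clX inE eqn_leq andbC mrankS ?subsetUr //=.
by apply: leq_trans rYX; apply: mrankS; rewrite subUset sub1set yY.
Qed.

Lemma dependent_circuit X :
  ~~ indep M X -> exists2 C, circuit M C & C \subset X.
Proof.
case/(minset_exists (P := predC (indep M))) => C /minsetP[dC minC] sCX.
exists C => //.
apply/andP; split=> //; apply/forall_inP => x xC; apply/negPn/negP => dCx.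
by have := minC _ dCx (subD1set C x); move/setP/(_ x); rewrite !inE eqxx xC.
Qed.

Lemma kfree_indep k V Y : kfree M k V -> Y \subset V -> #|Y| <= k -> indep M Y.
Proof.
move=> /forallP freeV sYV cY; apply/negPn/negP => /dependent_circuit[C cC sCY].
have := freeV C; rewrite cC (subset_trans sCY sYV) andbT /=.
by rewrite (leq_trans (subset_leq_card sCY) cY).
Qed.

Lemma sub_clk k X : X \subset clk M k X.
Proof. by apply/bigcapsP => Z /andP[]. Qed.

Lemma hyperplane_mrank H : hyperplane M H -> (mrank M H).+1 = mrk M.
Proof. by case/andP => _ /eqP. Qed.

Lemma indep_sub_hyperplane_card H I :
  hyperplane M H -> indep M I -> I \subset H -> #|I| < mrk M.
Proof. by move=> hH iI sIH; rewrite -(hyperplane_mrank hH) ltnS mrank_ub. Qed.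

Lemma hyperplane_indep_setU1 H Y x :
  hyperplane M H -> Y \subset H -> indep M Y -> #|Y| = (mrk M).-1 ->
  x \notin H -> indep M (x |: Y).
Proof.
move=> hH sYH iY cY xNH.
have r_gt0 : 0 < mrk M by rewrite -(hyperplane_mrank hH).
have rxH : mrk M <= mrank M (x |: H).
  move: xNH; have /andP[/eqP {2}<- _] := hH; rewrite inE -(hyperplane_mrank hH).
  by rewrite ltn_neqAle eq_sym => ->; rewrite mrankS ?subsetUr.
have [I /andP[iI sIxH] cI] := mrank_witness (x |: H).
have [|z /setDP[zI zNY] izY] := indep_aug iY iI; first by rewrite cY cI; lia.
have [<- // | zx] := eqVneq z x.
have zH : z \in H by have := subsetP sIxH z zI; rewrite !inE (negPf zx).
have := indep_sub_hyperplane_card hH izY; rewrite subUset sub1set zH sYH.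
by rewrite cardsU1 zNY cY add1n; lia.
Qed.

Lemma hyperplane_unique H1 H2 Y :
  hyperplane M H1 -> hyperplane M H2 -> Y \subset H1 -> Y \subset H2 ->
  indep M Y -> #|Y| = (mrk M).-1 -> H1 = H2.
Proof.
move=> h1 h2 s1 s2 iY cY; apply/eqP; rewrite eqEsubset.
wlog suff : H1 H2 h1 h2 s1 s2 / H1 \subset H2.
  by move=> sub; rewrite (sub H1 H2) ?(sub H2 H1).
apply/subsetP => x xH1; apply: contraT => xNH2.
have xNY : x \notin Y by apply: contra xNH2; apply: (subsetP s2).
have := indep_sub_hyperplane_card h1 (hyperplane_indep_setU1 h2 s2 iY cY xNH2).
rewrite subUset sub1set xH1 s1 cardsU1 xNY cY add1n => /(_ isT).
by rewrite -(hyperplane_mrank h1) ltnn.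
Qed.

End MatroidRank.

Section PavingFromBlocks.
Variables (T : finType) (r : nat) (blocks : pred {set T}).
Hypothesis blocks_card : forall B, blocks B -> 0 < r <= #|B|.
Hypothesis block_unique : forall B1 B2 Y : {set T},
  blocks B1 -> blocks B2 -> Y \subset B1 -> Y \subset B2 -> #|Y| = r.-1 ->
  B1 = B2.
Implicit Types (B I J S X Y : {set T}) (x : T).

Definition covered I := [exists B, blocks B && (I \subset B)].

Definition block_indep I := (#|I| < r) || (#|I| == r) && ~~ covered I.

Lemma block_indep_card I : block_indep I -> #|I| <= r.
Proof. by case/orP => [/ltnW //| /andP[/eqP -> _]]. Qed.

Lemma block_dep_card I : ~~ block_indep I -> r <= #|I|.
Proof. by rewrite negb_or -leqNgt => /andP[]. Qed.

Lemma block_indep_rE I : #|I| = r -> block_indep I = ~~ covered I.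
Proof. by move=> cI; rewrite /block_indep cI ltnn eqxx. Qed.

Lemma block_indep0 : block_indep set0.
Proof.
rewrite /block_indep cards0; case: posnP => // r0.
by rewrite r0 /=; apply/existsP => -[B /andP[/blocks_card]]; rewrite r0.
Qed.

Lemma block_indep_sub I J : J \subset I -> block_indep I -> block_indep J.
Proof.
move=> sJI; have cJI := subset_leq_card sJI.
case/orP => [ltI | /andP[/eqP cI uI]].
  by rewrite /block_indep (leq_ltn_trans cJI ltI).
rewrite /block_indep; case: ltngtP => // [|eJ]; first by lia.
by have /setP-> : J =i I by apply/subset_cardP; rewrite ?eJ ?cI.
Qed.

Lemma coveredS I J : J \subset I -> covered I -> covered J.
Proof.
move=> sJI /existsP[B /andP[bB sIB]]; apply/existsP; exists B.
by rewrite bB (subset_trans sJI sIB).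
Qed.

Lemma block_extension B S x :
  blocks B -> S \subset B -> #|S| = r.-1 -> covered (x |: S) -> x \in B.
Proof.
move=> bB sSB cS /existsP[B' /andP[bB' sxSB']].
have sSB' : S \subset B' by apply: subset_trans sxSB'; apply: subsetUr.
by rewrite (block_unique bB bB' sSB sSB' cS) (subsetP sxSB') ?setU11.
Qed.

Lemma sub_block_of_extensions B S J :
  blocks B -> S \subset B -> #|S| = r.-1 ->
  (forall x, x \in J :\: S -> covered (x |: S)) -> J \subset B.
Proof.
move=> bB sSB cS covJ; apply/subsetP => x xJ.
have [xS | xNS] := boolP (x \in S); first exact: (subsetP sSB).
by apply: block_extension bB sSB cS _; apply: covJ; rewrite inE xNS.
Qed.

Lemma block_indep_aug I J : block_indep I -> block_indep J -> #|I| < #|J| ->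
  exists2 x, x \in J :\: I & block_indep (x |: I).
Proof.
move=> iI iJ ltIJ; have cJr := block_indep_card iJ.
have [x0 x0JI] : exists x, x \in J :\: I.
  by apply/set0Pn/negP; rewrite setD_eq0 => /subset_leq_card; lia.
have [ltIr | geIr] := ltnP #|I|.+1 r.
  by exists x0 => //; rewrite /block_indep cardsU1 (setDP x0JI).2 ltIr.
have cJ : #|J| = r by lia.
have cI : #|I| = r.-1 by lia.
have cxI x : x \in J :\: I -> #|x |: I| = r.
  by move=> xJI; rewrite cardsU1 (setDP xJI).2 cI add1n prednK //; lia.
apply/exists_inP; apply: contraLR iJ; rewrite negb_exists_in => /forall_inP dep.
rewrite block_indep_rE // negbK.
have covxI x : x \in J :\: I -> covered (x |: I).
  by move=> xJI; have := dep x xJI; rewrite block_indep_rE ?cxI // negbK.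
have /existsP[B /andP[bB sIB]] := coveredS (subsetUr _ I) (covxI x0 x0JI).
apply/existsP; exists B.
by rewrite bB (sub_block_of_extensions bB sIB cI covxI).
Qed.

Definition paving_of_blocks : matroid T :=
  Matroid block_indep0 block_indep_sub block_indep_aug.

Local Notation N := paving_of_blocks.

Lemma mrank_paving_of_blocks_le X : mrank N X <= r.
Proof. by apply: mrank_leP => I /block_indep_card. Qed.

Lemma paving_of_blocks_paving : paving N.
Proof.
apply/forallP => C; apply/implyP => /andP[dC _].
exact: leq_trans (mrank_paving_of_blocks_le _) (block_dep_card dC).
Qed.

Lemma mrk_paving_of_blocks B : #|B| = r -> ~~ covered B -> mrk N = r.
Proof.
move=> cB uB; apply/eqP; rewrite eqn_leq mrank_paving_of_blocks_le -{1}cB.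
by apply: mrank_ub (subsetT B); rewrite /= block_indep_rE.
Qed.

Lemma mrank_block B : blocks B -> mrank N B = r.-1.
Proof.
move=> bB; have /andP[r_gt0 rB] := blocks_card bB.
apply/eqP; rewrite eqn_leq; apply/andP; split.
  apply: mrank_leP => I iI sIB; rewrite -ltnS prednK // ltn_neqAle.
  rewrite block_indep_card // andbT; apply: contraTneq iI => cI.
  by rewrite /= block_indep_rE // negbK; apply/existsP; exists B; rewrite bB.
have [S sSB cS] := subset_of_card (leq_trans (leq_pred r) rB).
by rewrite -cS; apply: mrank_ub sSB; rewrite /= /block_indep cS ltn_predL r_gt0.
Qed.

Lemma mcl_block B : blocks B -> mcl N B = B.
Proof.
move=> bB; have /andP[r_gt0 rB] := blocks_card bB.
apply/setP => x; rewrite inE; apply/idP/idP => [|xB]; last first.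
  by rewrite (setUidPr (_ : [set x] \subset B)) ?sub1set.
apply: contraLR => xNB; rewrite (mrank_block bB).
have [S sSB cS] := subset_of_card (leq_trans (leq_pred r) rB).
have xNS : x \notin S by apply: contra xNB; apply: (subsetP sSB).
have cxS : #|x |: S| = r by rewrite cardsU1 xNS cS add1n prednK.
have : #|x |: S| <= mrank N (x |: B).
  apply: mrank_ub (setUS _ sSB); rewrite /= block_indep_rE //.
  by apply: contra xNB; apply: block_extension bB sSB cS.
by rewrite cxS; apply: contraTneq => ->; rewrite -ltnNge ltn_predL.
Qed.

Lemma block_dependent_hyperplane B :
  mrk N = r -> blocks B -> dependent_hyperplane N B.
Proof.
move=> rkN bB; have /andP[r_gt0 rB] := blocks_card bB.
rewrite /dependent_hyperplane /hyperplane /flat mcl_block // mrank_block //.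
rewrite rkN prednK // !eqxx /= /block_indep negb_or -leqNgt rB /=.
rewrite negb_and negbK.
by apply/orP; right; apply/existsP; exists B; rewrite bB subxx.
Qed.

Lemma dependent_hyperplane_block X :
  mrk N = r -> dependent_hyperplane N X -> blocks X.
Proof.
move=> rkN /andP[/andP[flatX /eqP rX] dX]; rewrite rkN in rX.
have rXc := block_dep_card dX.
have r_gt0 : 0 < r by rewrite -rX.
have covX S : S \subset X -> #|S| = r -> covered S.
  move=> sSX cS; rewrite -[covered S]negbK -block_indep_rE //.
  by apply/negP => iS; have := @mrank_ub _ N _ _ iS sSX; rewrite cS -rX ltnn.
have [S sSX cS] := subset_of_card rXc.
have /existsP[B /andP[bB sSB]] := covX S sSX cS.
have [s sS] : exists s, s \in S by apply/card_gt0P; rewrite cS.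
have cSs : #|S :\ s| = r.-1 by rewrite (cardsD1 s S) sS in cS; rewrite -cS.
have sXB : X \subset B.
  refine (sub_block_of_extensions bB (subset_trans (subD1set S s) sSB) cSs _).
  move=> x /setDP[xX xNSs]; apply: covX.
    by rewrite subUset sub1set xX (subset_trans (subD1set S s) sSX).
  by rewrite cardsU1 xNSs cSs add1n prednK.
suff -> : X = B by [].
by apply: esym; apply: flat_rank_eq flatX sXB _; rewrite mrank_block // -rX.
Qed.

End PavingFromBlocks.

Section LargeFreeSets.
Variables (T : finType) (M : matroid T) (U : {set T} -> {set T}).
Hypothesis hU : forall H : {set T}, hyperplane M H ->
  kfree M (mrk M).-1 (U H) /\ clk M ((mrk M)%:Z - 2)%R (U H) = H.
Implicit Types (B H Y : {set T}).

Definition large_U : pred {set T} :=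
  [pred B | [exists H, [&& hyperplane M H, B == U H & mrk M <= #|U H|]]].

Lemma U_sub_hyperplane H : hyperplane M H -> U H \subset H.
Proof. by move=> hH; rewrite -{2}(hU hH).2 sub_clk. Qed.

Lemma large_U_card B : large_U B -> 0 < mrk M <= #|B|.
Proof.
case/existsP => H /and3P[hH /eqP-> ->].
by rewrite -(hyperplane_mrank hH).
Qed.

Lemma large_U_unique B1 B2 Y : large_U B1 -> large_U B2 ->
  Y \subset B1 -> Y \subset B2 -> #|Y| = (mrk M).-1 -> B1 = B2.
Proof.
case/existsP => H1 /and3P[h1 /eqP-> _]; case/existsP => H2 /and3P[h2 /eqP-> _].
move=> s1 s2 cY; have iY := kfree_indep (hU h1).1 s1 (eq_leq cY).
have s1H := subset_trans s1 (U_sub_hyperplane h1).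
have s2H := subset_trans s2 (U_sub_hyperplane h2).
by rewrite (hyperplane_unique h1 h2 s1H s2H iY cY).
Qed.

Lemma uncovered_basis :
  exists2 B : {set T}, #|B| = mrk M & ~~ covered large_U B.
Proof.
have [B /andP[iB _] cB] := mrank_witness M [set: T].
exists B => //; apply/existsP => -[_ /andP[/existsP[H /and3P[hH /eqP-> _]]]].
move=> /subset_trans/(_ (U_sub_hyperplane hH)) sBH.
by have := indep_sub_hyperplane_card hH iB sBH; rewrite cB ltnn.
Qed.

End LargeFreeSets.

Theorem lemma4p3 (T : finType) (M : matroid T) (U : {set T} -> {set T}) :
  (forall H : {set T}, hyperplane M H ->
     kfree M (mrk M).-1 (U H) /\ clk M ((mrk M)%:Z - 2)%R (U H) = H) ->
  exists N : matroid T,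
    [/\ mrk N = mrk M, paving N &
        forall X : {set T},
          dependent_hyperplane N X <->
          exists2 H : {set T}, hyperplane M H & (X = U H /\ mrk M <= #|U H|)].
Proof.
move=> hU; have U_card := @large_U_card T M U.
have U_unique := large_U_unique hU.
exists (paving_of_blocks U_card U_unique).
have [B cB uB] := uncovered_basis hU.
have rkN := mrk_paving_of_blocks U_card U_unique cB uB.
split=> // [|X]; first exact: paving_of_blocks_paving.
split=> [/(dependent_hyperplane_block rkN) | [H hH [-> cH]]].
  by case/existsP => H /and3P[hH /eqP-> cH]; exists H.
apply: block_dependent_hyperplane rkN _.
by apply/existsP; exists H; rewrite hH eqxx.
Qed.
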